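(* Let $K$ be a field of characteristic $p\neq 2$, and let $Os^+(0,0)$ be the $K$-algebra with basis $\{e_i: i\in\mathbb Z,\ i\ge -1\}$ and multiplication $e_i\star e_j=(i+j+2)e_{i+j}$. Then every multilinear polynomial identity of degree $3$ of $(Os^+(0,0),\star)$ follows from the commutativity identity $t_1t_2=t_2t_1$. *)

From HB Require Import structures.
From mathcomp Require Import all_boot all_order all_algebra.
Set Implicit Arguments. Unset Strict Implicit. Unset Printing Implicit Defensive.
Import Order.TTheory GRing.Theory Num.Theory.
Local Open Scope ring_scope.

(* Carrier: {poly K}; the monomial 'X^n represents the basis vector   *)
(* e_(n-1)  (n : nat, so i = n-1 ranges over i >= -1).                *)
(* Product, defined bilinearly from the basis rule                    *)
(*   e_i * e_j = (i+j+2) e_(i+j):                                     *)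
(* with i = a-1, j = b-1 : coefficient a+b, target e_(a+b-2) = X^(a+b-1)*)
(* (when a+b = 0 the coefficient is 0, so the target is irrelevant).  *)

Definition os_e (K : fieldType) (n : nat) : {poly K} := 'X^n.

Definition os_star (K : fieldType) (x y : {poly K}) : {poly K} :=
  \sum_(a < size x) \sum_(b < size y)
     (x`_a * y`_b * (a + b)%:R) *: os_e K (a + b).-1.

Inductive nterm : Type :=
| NVar of nat
| NMul of nterm & nterm.

Fixpoint nterm_eqb (u v : nterm) : bool :=
  match u, v with
  | NVar m, NVar n => m == n
  | NMul u1 u2, NMul v1 v2 => nterm_eqb u1 v1 && nterm_eqb u2 v2
  | _, _ => false
  end.

Lemma nterm_eqP : Equality.axiom nterm_eqb.
Proof.
elim=> [m|u1 IH1 u2 IH2] [n|v1 v2] /=; try by constructor.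
- by apply: (iffP eqP) => [->|[]].
- by apply: (iffP andP) => [[/IH1 -> /IH2 ->]|[<- <-]]; split; [apply/IH1|apply/IH2].
Qed.

HB.instance Definition _ := hasDecEq.Build nterm nterm_eqP.

Fixpoint nvars (u : nterm) : seq nat :=
  match u with
  | NVar n => [:: n]
  | NMul u v => nvars u ++ nvars v
  end.

Definition fpoly (K : fieldType) := seq (K * nterm).

Definition fcoef (K : fieldType) (f : fpoly K) (m : nterm) : K :=
  \sum_(c <- f | c.2 == m) c.1.

Definition fadd (K : fieldType) (f g : fpoly K) : fpoly K := f ++ g.
Definition fscale (K : fieldType) (k : K) (f : fpoly K) : fpoly K :=
  [seq (k * c.1, c.2) | c <- f].
Definition fmul (K : fieldType) (f g : fpoly K) : fpoly K :=
  [seq (a.1 * b.1, NMul a.2 b.2) | a <- f, b <- g].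

Fixpoint msubst (K : fieldType) (s : nat -> fpoly K) (u : nterm) : fpoly K :=
  match u with
  | NVar n => s n
  | NMul u v => fmul (msubst s u) (msubst s v)
  end.

Definition fsubst (K : fieldType) (s : nat -> fpoly K) (f : fpoly K) : fpoly K :=
  flatten [seq fscale c.1 (msubst s c.2) | c <- f].

(* T-ideal generated by a set S of polynomials: the smallest ideal of the
   free nonassociative algebra containing S and closed under all
   substitutions (endomorphisms). Membership is up to equality of
   polynomials (equal coefficients). *)
Inductive in_Tideal (K : fieldType) (S : fpoly K -> Prop) : fpoly K -> Prop :=
| TI_gen g s : S g -> in_Tideal S (fsubst s g)
| TI_zero : in_Tideal S [::]
| TI_add f g : in_Tideal S f -> in_Tideal S g -> in_Tideal S (fadd f g)
| TI_scale k f : in_Tideal S f -> in_Tideal S (fscale k f)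
| TI_mull h f : in_Tideal S f -> in_Tideal S (fmul h f)
| TI_mulr f h : in_Tideal S f -> in_Tideal S (fmul f h)
| TI_eq f g : in_Tideal S f -> fcoef f =1 fcoef g -> in_Tideal S g.

Definition comm_poly (K : fieldType) : fpoly K :=
  [:: (1, NMul (NVar 1) (NVar 2)); (-1, NMul (NVar 2) (NVar 1))].

Definition follows_from_comm (K : fieldType) (f : fpoly K) : Prop :=
  in_Tideal (fun g => g = comm_poly K) f.

Definition multilinear3 (K : fieldType) (f : fpoly K) : bool :=
  all (fun c => perm_eq (nvars c.2) [:: 1%N; 2%N; 3%N]) f.

Fixpoint os_evalm (K : fieldType) (env : nat -> {poly K}) (u : nterm) : {poly K} :=
  match u with
  | NVar n => env n
  | NMul u v => os_star (os_evalm env u) (os_evalm env v)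
  end.

Definition os_eval (K : fieldType) (env : nat -> {poly K}) (f : fpoly K) : {poly K} :=
  \sum_(c <- f) c.1 *: os_evalm env c.2.

Definition os_identity (K : fieldType) (f : fpoly K) : Prop :=
  forall env : nat -> {poly K}, os_eval env f = 0.

From mathcomp Require Import all_boot all_order all_algebra.
From mathcomp Require Import ring zify.
Set Implicit Arguments. Unset Strict Implicit. Unset Printing Implicit Defensive.
Import GRing.Theory.
Local Open Scope ring_scope.

(* Modulo commutativity, every multilinear monomial of degree 3 in t_1, t_2,
   t_3 equals (t_a t_b) t_c with a < b, so it is determined by its isolated
   variable c, and a multilinear f is congruent to
   x (t_2 t_3) t_1 + y (t_1 t_3) t_2 + z (t_1 t_2) t_3.
   Since the product of Os^+(0,0) is commutative, f and this normal form have
   the same values.  Put e_1 at t_k and e_(-1) at the two other variables: as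
   (e_(-1) e_(-1)) e_1 = 0 and (e_1 e_(-1)) e_(-1) = (e_(-1) e_1) e_(-1) = 2 e_(-1),
   the value is twice the sum of the two coefficients other than the k-th one.
   Hence y + z = x + z = x + y = 0, and x = y = z = 0 because 2 is invertible. *)

Section OsStar.
Variable K : fieldType.
Implicit Types x y : {poly K}.

Lemma os_starC x y : os_star x y = os_star y x.
Proof.
rewrite /os_star exchange_big; apply: eq_bigr => b _; apply: eq_bigr => a _.
by rewrite [x`_a * _]mulrC addnC.
Qed.

Lemma os_starZl (c : K) x y : os_star (c *: x) y = c *: os_star x y.
Proof.
have [->|c_neq0] := eqVneq c 0; first by rewrite !scale0r /os_star size_poly0 big_ord0.
rewrite /os_star size_scale // scaler_sumr; apply: eq_bigr => a _.
rewrite scaler_sumr; apply: eq_bigr => b _.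
by rewrite coefZ scalerA !mulrA.
Qed.

Lemma os_starXX (a b : nat) :
  os_star ('X^a : {poly K}) 'X^b = (a + b)%:R *: 'X^((a + b).-1).
Proof.
rewrite /os_star !size_polyXn big_ord_recr /= big1 ?add0r => [|i _]; last first.
  by apply: big1 => j _; rewrite coefXn (ltn_eqF (ltn_ord i)) !mul0r scale0r.
rewrite big_ord_recr /= big1 ?add0r => [|j _]; last first.
  by rewrite [_`_j]coefXn (ltn_eqF (ltn_ord j)) mulr0 mul0r scale0r.
by rewrite !coefXn !eqxx !mul1r.
Qed.

End OsStar.

Section FreeAlgebra.
Variable K : fieldType.
Implicit Types (f : fpoly K) (u v w m : nterm).

Lemma fcoef_nil m : fcoef ([::] : fpoly K) m = 0.
Proof. by rewrite /fcoef big_nil. Qed.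

Lemma fcoef_cons (c : K * nterm) f m :
  fcoef (c :: f) m = (if c.2 == m then c.1 else 0) + fcoef f m.
Proof. by rewrite /fcoef big_cons; case: ifP; rewrite ?add0r. Qed.

Lemma fcoef_fadd f g m : fcoef (fadd f g) m = fcoef f m + fcoef g m.
Proof. by rewrite /fcoef big_cat. Qed.

Lemma fcoef_fscale (k : K) f m : fcoef (fscale k f) m = k * fcoef f m.
Proof. by rewrite /fcoef big_map mulr_sumr. Qed.

Lemma fcoef_notin f m : m \notin [seq c.2 | c <- f] -> fcoef f m = 0.
Proof.
move=> m_f; rewrite /fcoef big1_seq // => c /andP[/eqP c_m c_f].
by case/negP: m_f; rewrite -c_m map_f.
Qed.

Lemma follows_from_comm_coef0 f : fcoef f =1 (fun=> 0) -> follows_from_comm f.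
Proof. by move=> f0; apply: TI_eq (TI_zero _) _ => m; rewrite fcoef_nil f0. Qed.

Definition comm_equiv u v : Prop := follows_from_comm [:: (1 : K, u); (-1, v)].

Lemma comm_equiv_refl u : comm_equiv u u.
Proof.
apply: follows_from_comm_coef0 => m; rewrite !fcoef_cons fcoef_nil /=.
by case: eqP; rewrite ?addr0 ?subrr.
Qed.

Lemma comm_equiv_trans u v w : comm_equiv u v -> comm_equiv v w -> comm_equiv u w.
Proof.
move=> uv vw; apply: TI_eq (TI_add uv vw) _ => m.
rewrite fcoef_fadd !fcoef_cons !fcoef_nil /=.
by case: eqP; case: eqP; case: eqP => _ _ _; ring.
Qed.

Lemma comm_equiv_swap u v : comm_equiv (NMul u v) (NMul v u).
Proof.
pose s n : fpoly K := if n == 1%N then [:: (1, u)] else [:: (1, v)].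
apply: TI_eq (@TI_gen _ _ _ s erefl) _ => m.
by rewrite /fsubst /= !fcoef_cons !fcoef_nil /= !mulr1.
Qed.

Lemma comm_equiv_mulr u v w : comm_equiv u v -> comm_equiv (NMul u w) (NMul v w).
Proof.
move=> uv; apply: TI_eq (TI_mulr [:: (1, w)] uv) _ => m.
by rewrite /fmul /= !fcoef_cons !fcoef_nil /= !mulr1.
Qed.

End FreeAlgebra.

Definition mon3 (a b c : nat) : nterm := NMul (NMul (NVar a) (NVar b)) (NVar c).

Definition normalize3 (m : nterm) : nterm :=
  match m with
  | NMul (NMul (NVar a) (NVar b)) (NVar c)
  | NMul (NVar c) (NMul (NVar a) (NVar b)) => mon3 (minn a b) (maxn a b) c
  | _ => m
  end.

Section CommCongruence.
Variable R : nterm -> nterm -> Prop.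
Hypothesis R_refl : forall u, R u u.
Hypothesis R_trans : forall u v w, R u v -> R v w -> R u w.
Hypothesis R_swap : forall u v, R (NMul u v) (NMul v u).
Hypothesis R_mulr : forall u v w, R u v -> R (NMul u w) (NMul v w).

Lemma rel_sort_factors a b w :
  R (NMul (NMul (NVar a) (NVar b)) w) (NMul (NMul (NVar (minn a b)) (NVar (maxn a b))) w).
Proof. by case: leqP => _; [apply: R_refl | apply/R_mulr/R_swap]. Qed.

Lemma rel_normalize3 m : R m (normalize3 m).
Proof.
case: m => [n | [c | [a | ? ?] [b | ? ?]] [c' | [a' | ? ?] [b' | ? ?]]] /=;
  first [exact: R_refl | exact: rel_sort_factors
        | exact: R_trans (R_swap _ _) (rel_sort_factors _ _ _)].
Qed.

End CommCongruence.

Definition fnormalize3 (K : fieldType) (f : fpoly K) : fpoly K :=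
  [seq (c.1, normalize3 c.2) | c <- f].

Section Normalization.
Variable K : fieldType.
Implicit Types f : fpoly K.

Lemma follows_from_comm_sub_fnormalize3 f :
  follows_from_comm (fadd f (fscale (-1) (fnormalize3 f))).
Proof.
elim: f => [|[k m] f IH] /=; first exact: TI_zero.
have m_equiv := rel_normalize3 (@comm_equiv_refl K) (@comm_equiv_trans K)
  (@comm_equiv_swap K) (@comm_equiv_mulr K) m.
apply: TI_eq (TI_add (TI_scale k m_equiv) IH) _ => x.
rewrite !(fcoef_fadd, fcoef_fscale, fcoef_cons, fcoef_nil) /=.
by case: eqP; case: eqP => _ _; ring.
Qed.

Lemma follows_from_comm_fnormalize3 f :
  fcoef (fnormalize3 f) =1 (fun=> 0) -> follows_from_comm f.
Proof.
move=> nf0; apply: TI_eq (follows_from_comm_sub_fnormalize3 f) _ => x.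
by rewrite fcoef_fadd fcoef_fscale nf0 mulr0 addr0.
Qed.

Lemma os_identity_fnormalize3 f : os_identity f -> os_identity (fnormalize3 f).
Proof.
move=> f_id env; rewrite -(f_id env) /os_eval big_map; apply: eq_bigr => c _.
congr (_ *: _); symmetry.
apply: (@rel_normalize3 (fun u v => os_evalm env u = os_evalm env v)) => //=.
- by move=> u v w ->.
- by move=> u v; rewrite os_starC.
- by move=> u v w ->.
Qed.

End Normalization.

Lemma size_nvars_gt0 u : (0 < size (nvars u))%N.
Proof. by elim: u => //= u IH v _; rewrite size_cat addn_gt0 IH. Qed.

Lemma nvars_size1 u : size (nvars u) = 1%N -> exists a, u = NVar a.
Proof.
case: u => [a _|u v /=]; first by exists a.
rewrite size_cat => uv1; exfalso.
by have := size_nvars_gt0 u; have := size_nvars_gt0 v; lia.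
Qed.

Lemma nvars_size2 u : size (nvars u) = 2%N -> exists a b, u = NMul (NVar a) (NVar b).
Proof.
case: u => [//|u v] /=; rewrite size_cat => uv2.
have := size_nvars_gt0 u; have := size_nvars_gt0 v => v_gt0 u_gt0.
have [a ->] : exists a, u = NVar a by apply: nvars_size1; lia.
have [b ->] : exists b, v = NVar b by apply: nvars_size1; lia.
by exists a, b.
Qed.

Definition nterm3 (s : seq nat) : seq nterm :=
  let t i := NVar (nth 0%N s i) in
  [:: NMul (NMul (t 0%N) (t 1%N)) (t 2%N); NMul (t 0%N) (NMul (t 1%N) (t 2%N))].

Lemma nterm3_nvars m : size (nvars m) = 3%N -> m \in nterm3 (nvars m).
Proof.
case: m => [//|u v] /=; rewrite size_cat => uv3.
have := size_nvars_gt0 u; have := size_nvars_gt0 v => v_gt0 u_gt0.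
have [[u1 v2]|[u2 v1]] : size (nvars u) = 1%N /\ size (nvars v) = 2%N \/
                         size (nvars u) = 2%N /\ size (nvars v) = 1%N by lia.
- have [c ->] := nvars_size1 u1; have [a [b ->]] := nvars_size2 v2.
  by rewrite !inE eqxx orbT.
- have [a [b ->]] := nvars_size2 u2; have [c ->] := nvars_size1 v1.
  by rewrite !inE eqxx.
Qed.

Definition std3 : seq nterm := [:: mon3 2 3 1; mon3 1 3 2; mon3 1 2 3].

Lemma normalize3_multilinear m :
  perm_eq (nvars m) [:: 1; 2; 3]%N -> normalize3 m \in std3.
Proof.
move=> m_perm; have m_nterm3 := nterm3_nvars (perm_size m_perm).
have all_perms : all (fun s => all (fun m => normalize3 m \in std3) (nterm3 s))
                     (permutations [:: 1; 2; 3]%N) by [].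
rewrite -mem_permutations in m_perm.
exact: allP (allP all_perms _ m_perm) _ m_nterm3.
Qed.

Section Std3Identities.
Variable K : fieldType.
Implicit Types g : fpoly K.

(* t_k := e_1 = 'X^2 and every other variable := e_(-1) = 'X^0. *)
Definition os_test_env (k : nat) : nat -> {poly K} :=
  fun n => if n == k then 'X^2 else 'X^0.

Lemma os_evalm_test_env (a b c k : nat) : uniq [:: a; b; c] -> k \in [:: a; b; c] ->
  os_evalm (os_test_env k) (mon3 a b c) = if c == k then 0 else 2%:R.
Proof.
rewrite /= /os_test_env !inE !negb_or => /and3P[/andP[ab ac] bc _].
case/or3P=> /eqP->; rewrite !eqxx ?[b == a]eq_sym ?[c == _]eq_sym.
all: rewrite ?(negbTE ab, negbTE ac, negbTE bc) !os_starXX os_starZl os_starXX.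
all: by rewrite ?scale0r // scalerA -natrM ?addn0 ?add0n /= expr0 scaler_nat.
Qed.

Lemma os_eval_supp env g (s : seq nterm) : uniq s ->
  {subset [seq c.2 | c <- g] <= s} ->
  os_eval env g = \sum_(m <- s) fcoef g m *: os_evalm env m.
Proof.
move=> s_uniq; elim: g => [|c g IH] g_s.
  by rewrite /os_eval big_nil big1 // => m _; rewrite fcoef_nil scale0r.
rewrite /os_eval big_cons -/(os_eval env g) IH => [|m m_g]; last first.
  by rewrite g_s ?inE ?m_g ?orbT.
under [RHS]eq_bigr do rewrite fcoef_cons scalerDl.
rewrite big_split /=; congr (_ + _).
rewrite (bigD1_seq c.2) ?g_s ?mem_head //= eqxx big1 ?addr0 // => m.
by rewrite eq_sym => /negbTE->; rewrite scale0r.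
Qed.

Lemma pair_sums_eq0 (x y z : K) : 2%:R != 0 :> K ->
  y + z = 0 -> x + z = 0 -> x + y = 0 -> [/\ x = 0, y = 0 & z = 0].
Proof.
move=> two_neq0 yz xz xy.
have x0 : x = 0.
  have x2 : x * 2%:R = (x + y) + (x + z) - (y + z) by ring.
  move: x2; rewrite xy xz yz subr0 addr0 => /eqP.
  by rewrite mulf_eq0 (negbTE two_neq0) orbF => /eqP.
by move: xy xz; rewrite x0 !add0r.
Qed.

Lemma os_identity_std3_coef0 g : 2%:R != 0 :> K ->
  {subset [seq c.2 | c <- g] <= std3} -> os_identity g -> fcoef g =1 (fun=> 0).
Proof.
move=> two_neq0 g_std g_id.
have test_sum k : \sum_(m <- std3) fcoef g m *: os_evalm (os_test_env k) m = 0.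
  by rewrite -(os_eval_supp _ _ g_std) ?g_id.
have [x0 y0 z0] : [/\ fcoef g (mon3 2 3 1) = 0, fcoef g (mon3 1 3 2) = 0
                   & fcoef g (mon3 1 2 3) = 0].
  apply: pair_sums_eq0 => //;
    [move: (test_sum 1%N) | move: (test_sum 2%N) | move: (test_sum 3%N)];
    rewrite /std3 !big_cons big_nil !os_evalm_test_env //= !scaler0 !addr0 ?add0r;
    rewrite -scalerDl => /eqP;
    by rewrite scaler_eq0 -polyC_natr polyC_eq0 (negbTE two_neq0) orbF => /eqP.
move=> m; have [|m_std] := boolP (m \in std3).
  by rewrite !inE => /or3P[] /eqP->.
by apply: fcoef_notin; apply: contra m_std; apply: g_std.
Qed.

End Std3Identities.

Unset Implicit Arguments.
Theorem mainTheorem13 (K : fieldType) (hK : (2%:R : K) != 0) (f : fpoly K) :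
  multilinear3 f -> os_identity f -> follows_from_comm f.
Proof.
move=> f_ml f_id; apply: follows_from_comm_fnormalize3.
apply: os_identity_std3_coef0 hK _ (os_identity_fnormalize3 f_id).
move=> _ /mapP[[k m] /mapP[c c_f [_ ->]] ->].
exact: normalize3_multilinear (allP f_ml c c_f).
Qed.
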